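(* Let $\Gamma,\Delta$ be finite sets of formulas, $\alpha$ an atomic mapping for $\Gamma\cup\Delta$, and $\mathcal{Q}$ the quasi-simulation base for $\Gamma\cup\Delta$ and $\alpha$. Let $\Theta_{\mathsf{At}}$ be any (possibly empty) finite set of atoms, $\Sigma$ any non-empty finite set of subformulas of formulas in $\Gamma\cup\Delta$, and $\Sigma_{\mathsf{At}}=\{p^B\mid B\in\Sigma\}$. Then for every base $\mathcal{B}\supseteq\mathcal{Q}$: $\Vdash_{\mathcal{B}}\Sigma,\Theta_{\mathsf{At}}$ if and only if $\vdash_{\mathcal{B}}\ \Rightarrow\Sigma_{\mathsf{At}},\Theta_{\mathsf{At}}$.
   Context: Fix a countably infinite set $\mathsf{At}$ of atoms. Formulas are built from atoms and the constant $\bot$ using the binary connectives $\land,\lor,\to$. All contexts are finite sets (not multisets) of formulas; a comma denotes union; a subscript $\mathsf{At}$ indicates a finite set of atoms. An atomic sequent has the form $\Gamma_{\mathsf{At}} \Rightarrow \Delta_{\mathsf{At}}$. An atomic rule has finitely many (possibly zero) atomic sequents as premises and one atomic sequent as conclusion; a rule with zero premises is an atomic axiom. A base is a (possibly empty) set of atomic rules; $\mathcal{C}\supseteq\mathcal{B}$ ($\mathcal{C}$ extends $\mathcal{B}$) if $\mathcal{C}$ contains every rule of $\mathcal{B}$. Derivability $\vdash_{\mathcal{B}}$ of atomic sequents is the least relation such that: (Axiom/Weakening) if an atomic axiom with conclusion $\Gamma_{\mathsf{At}}\Rightarrow\Delta_{\mathsf{At}}$ is in $\mathcal{B}$, then $\vdash_{\mathcal{B}}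 \Theta_{\mathsf{At}},\Gamma_{\mathsf{At}}\Rightarrow\Delta_{\mathsf{At}},\Sigma_{\mathsf{At}}$ for all sets of atoms $\Theta_{\mathsf{At}},\Sigma_{\mathsf{At}}$; (Mix) if a rule with premises $\Gamma^i_{\mathsf{At}}\Rightarrow\Delta^i_{\mathsf{At}}$ ($1\le i\le n$) and conclusion $\Gamma_{\mathsf{At}}\Rightarrow\Delta_{\mathsf{At}}$ is in $\mathcal{B}$ and $\vdash_{\mathcal{B}} \Theta^i_{\mathsf{At}},\Gamma^i_{\mathsf{At}}\Rightarrow\Delta^i_{\mathsf{At}},\Sigma^i_{\mathsf{At}}$ for each $i$, then $\vdash_{\mathcal{B}} \Theta^1_{\mathsf{At}},\dots,\Theta^n_{\mathsf{At}},\Gamma_{\mathsf{At}}\Rightarrow\Delta_{\mathsf{At}},\Sigma^1_{\mathsf{At}},\dots,\Sigma^n_{\mathsf{At}}$. Support $\Vdash_{\mathcal{B}}$: (At) $\Vdash_{\mathcal{B}}\Gamma_{\mathsf{At}}$ iff $\vdash_{\mathcal{B}}\ \Rightarrow\Gamma_{\mathsf{At}}$; ($\land$) $\Vdash_{\mathcal{B}} A\land B,\Gamma$ iff $\Vdash_{\mathcal{B}}A,\Gamma$ and $\Vdash_{\mathcal{B}}B,\Gamma$; ($\lor$) $\Vdash_{\mathcal{B}}A\lor B,\Gamma$ iff $\Vdash_{\mathcal{B}}A,B,\Gamma$; ($\to$) $\Vdash_{\mathcal{B}}A\to B,\Gamma$ iff $A\Vdash_{\mathcal{B}}B,\Gamma$;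 ($\bot$) $\Vdash_{\mathcal{B}}\bot,\Gamma$ iff $\Vdash_{\mathcal{B}}\Gamma$; (Inf) for $n\ge1$, $\{A^1,\dots,A^n\}\Vdash_{\mathcal{B}}\Delta$ iff for every $\mathcal{C}\supseteq\mathcal{B}$ and all sets of atoms $\Theta^1_{\mathsf{At}},\dots,\Theta^n_{\mathsf{At}}$, if $\Vdash_{\mathcal{C}}\Theta^i_{\mathsf{At}},A^i$ for all $i$ then $\Vdash_{\mathcal{C}}\Theta^1_{\mathsf{At}},\dots,\Theta^n_{\mathsf{At}},\Delta$ (and $\varnothing\Vdash_{\mathcal{B}}\Delta$ means $\Vdash_{\mathcal{B}}\Delta$). The atomic identity rule $\mathsf{Ainit}$ is the atomic axiom $\Gamma_{\mathsf{At}},p\Rightarrow p,\Delta_{\mathsf{At}}$. $\mathcal{HS}$ is the base consisting of all instances of $\mathsf{Ainit}$. Atomic mapping: for a set of formulas $\Sigma_0$ with set of subformulas $S$, an atomic mapping is an injective function $\alpha:S\to\mathsf{At}$ with $\alpha(p)=p$ for every atom $p\in S$; write $p^A:=\alpha(A)$. The quasi-simulation base $\mathcal{Q}$ for $\Sigma_0$ and $\alpha$ consists exactly of $\mathcal{HS}$ together with the following atomic rules, for all formulas $A,B$ such that the displayed compound formula lies in $S$ (and for $p^\bot$ when $\bot\in S$), and all sets of atoms $\Gamma,\Delta,\Gamma',\Delta'$: $Q\land_1$: from $\Gamma\Rightarrow\Delta,p^{A\land B}$ infer $\Gamma\Rightarrow\Delta,p^A$; $Q\land_2$: from $\Gamma\Rightarrow\Delta,p^{A\land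 B}$ infer $\Gamma\Rightarrow\Delta,p^B$; $R\land$: from $\Gamma\Rightarrow\Delta,p^A$ and $\Gamma'\Rightarrow\Delta',p^B$ infer $\Gamma,\Gamma'\Rightarrow\Delta,\Delta',p^{A\land B}$; $Q\lor$: from $\Gamma\Rightarrow\Delta,p^{A\lor B}$ infer $\Gamma\Rightarrow\Delta,p^A,p^B$; $R\lor$: from $\Gamma\Rightarrow\Delta,p^A,p^B$ infer $\Gamma\Rightarrow\Delta,p^{A\lor B}$; $Q\to$: from $\Gamma\Rightarrow\Delta,p^{A\to B}$ and $\Gamma'\Rightarrow\Delta',p^A$ infer $\Gamma,\Gamma'\Rightarrow\Delta,\Delta',p^B$; $R\to$: from $p^A,\Gamma\Rightarrow\Delta,p^B$ infer $\Gamma\Rightarrow\Delta,p^{A\to B}$; $Q\bot$: from $\Gamma\Rightarrow\Delta,p^\bot$ infer $\Gamma\Rightarrow\Delta$. *)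

From HB Require Import structures.
From mathcomp Require Import all_boot.

Set Implicit Arguments.
Unset Strict Implicit.
Unset Printing Implicit Defensive.

Definition atom := nat.

Inductive form : Type :=
| Atm of atom
| Bot
| And of form & form
| Or of form & form
| Imp of form & form.

Definition form_eq_dec : comparable form.
Proof. move=> x y; rewrite /decidable; decide equality; decide equality. Defined.
HB.instance Definition _ := comparableMixin form_eq_dec.

Fixpoint subf (A : form) : seq form :=
  A :: match A with
       | Atm _ | Bot => [::]
       | And B C | Or B C | Imp B C => subf B ++ subf C
       end.

Definition subformulas (G : seq form) : seq form := flatten (map subf G).

(** Finite sets (of atoms / formulas) are represented by lists, read
    extensionally (only membership matters). *)
Definition sequent := (seq atom * seq atom)%type.

Record rule := Rule { prems : seq sequent; concl : sequent }.

Definition base := rule -> Prop.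

Definition extends (C B : base) : Prop := forall r, B r -> C r.

(** Derivability in a base: (Axiom/Weakening), (Mix), and closure under
    extensional equality of the (set-)contexts. *)
Inductive derivable (B : base) : sequent -> Prop :=
| d_ax (G D Th Si : seq atom) :
    B (Rule [::] (G, D)) -> derivable B (Th ++ G, D ++ Si)
| d_mix (r : rule) (Th Si : nat -> seq atom) :
    B r ->
    (forall i, i < size (prems r) ->
       derivable B (Th i ++ (nth ([::], [::]) (prems r) i).1,
                    (nth ([::], [::]) (prems r) i).2 ++ Si i)) ->
    derivable B (flatten [seq Th i | i <- iota 0 (size (prems r))] ++ (concl r).1,
                 (concl r).2 ++ flatten [seq Si i | i <- iota 0 (size (prems r))])
| d_set (G D G' D' : seq atom) :
    derivable B (G, D) -> G =i G' -> D =i D' -> derivable B (G', D').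

Definition compound (A : form) : bool := if A is Atm _ then false else true.

Definition atoms_of (G : seq form) : seq atom :=
  pmap (fun A => if A is Atm p then Some p else None) G.

(* size ignoring atoms; decreases along every clause of the support relation *)
Fixpoint csize (A : form) : nat :=
  match A with
  | Atm _ => 0
  | Bot => 1
  | And B C | Or B C | Imp B C => (csize B + csize C).+1
  end.

Definition msr (G : seq form) : nat := sumn (map csize G).

(* Fuel-based rendering of the clauses (At),(/\),(\/),(->),(bot),(Inf):
   the first compound formula of the context is decomposed; the context
   [Gamma] of the clause is the set with the principal formula removed. *)
Fixpoint supp (n : nat) (B : base) (G : seq form) : Prop :=
  match n with
  | 0 => False
  | n'.+1 =>
    match [seq A <- G | compound A] with
    | [::] => derivable B ([::], atoms_of G)
    | A :: _ =>
      let R := [seq X <- G | X != A] in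
      match A with
      | Atm _ => True
      | Bot => supp n' B R
      | And A1 A2 => supp n' B (A1 :: R) /\ supp n' B (A2 :: R)
      | Or A1 A2 => supp n' B (A1 :: A2 :: R)
      | Imp A1 A2 =>
          (* A1 ||-_B A2, R  via (Inf) with n = 1 *)
          forall C : base, extends C B ->
          forall Th : seq atom,
            supp n' C (map Atm Th ++ [:: A1]) ->
            supp n' C (map Atm Th ++ A2 :: R)
      end
    end
  end.

Definition supports (B : base) (G : seq form) : Prop := supp (msr G).+1 B G.

Definition atomic_mapping (S : seq form) (alpha : form -> atom) : Prop :=
  {in S &, injective alpha} /\ (forall p, Atm p \in S -> alpha (Atm p) = p).

Definition HS : base := fun r =>
  exists (G D : seq atom) (p : atom), r = Rule [::] (p :: G, p :: D).

Definition QBase (S : seq form) (alpha : form -> atom) : base := fun r =>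
  HS r \/
  exists G D G' D' : seq atom,
  (exists A B, And A B \in S /\
     (r = Rule [:: (G, D ++ [:: alpha (And A B)])] (G, D ++ [:: alpha A]) \/
      r = Rule [:: (G, D ++ [:: alpha (And A B)])] (G, D ++ [:: alpha B]) \/
      r = Rule [:: (G, D ++ [:: alpha A]); (G', D' ++ [:: alpha B])]
               (G ++ G', D ++ D' ++ [:: alpha (And A B)]))) \/
  (exists A B, Or A B \in S /\
     (r = Rule [:: (G, D ++ [:: alpha (Or A B)])] (G, D ++ [:: alpha A; alpha B]) \/
      r = Rule [:: (G, D ++ [:: alpha A; alpha B])] (G, D ++ [:: alpha (Or A B)]))) \/
  (exists A B, Imp A B \in S /\
     (r = Rule [:: (G, D ++ [:: alpha (Imp A B)]); (G', D' ++ [:: alpha A])]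
               (G ++ G', D ++ D' ++ [:: alpha B]) \/
      r = Rule [:: (alpha A :: G, D ++ [:: alpha B])] (G, D ++ [:: alpha (Imp A B)]))) \/
  (Bot \in S /\ r = Rule [:: (G, D ++ [:: alpha Bot])] (G, D)).

(* Every support clause decomposes the first compound formula A of the
   context, and the rules of the quasi-simulation base for the main
   connective of A make derivability of its proxy atom [p^A] decompose in
   exactly the same way; so by induction on the size of the context,
   support of a context of subformulas coincides with derivability of the
   corresponding atoms.  The only delicate clause is (->): supporting
   [A1 -> A2, R] is tested in the extension of the base by the axiom
   [=> p^A1], and a deduction theorem, valid because the base contains
   the identity axioms for [p^A1], turns that axiom back into the
   antecedent [p^A1] of the premise of [R->]. *)

From mathcomp Require Import all_boot zify.

Set Implicit Arguments.
Unset Strict Implicit.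
Unset Printing Implicit Defensive.

Ltac solve_subset :=
  let x := fresh "x" in
  move=> x; apply/implyP; rewrite ?(mem_cat, inE);
  repeat match goal with
  | |- context [x \in ?s] => case: (x \in s)
  | |- context [x == ?y] => case: (x == y)
  end; done.

Lemma cat_subset_idr (T : eqType) (s1 s2 : seq T) :
  {subset s2 <= s1} -> s1 ++ s2 =i s1.
Proof. by move=> sub x; rewrite mem_cat; apply/orP/idP => [[|/sub]|->]; auto. Qed.

Lemma cat_subset_idl (T : eqType) (s1 s2 : seq T) :
  {subset s1 <= s2} -> s1 ++ s2 =i s2.
Proof. by move=> sub x; rewrite mem_cat orbC -mem_cat; apply: cat_subset_idr. Qed.

Lemma mem_flatten_const (T : eqType) (s : seq T) n x :
  0 < n -> (x \in flatten [seq s | _ <- iota 0 n]) = (x \in s).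
Proof.
move=> n_gt0; apply/flatten_mapP/idP => [[] //|xs].
by exists 0; rewrite // mem_iota.
Qed.

Section Derivability.
Variable B : base.

Lemma derivable_weaken (G D G' D' : seq atom) :
  derivable B (G, D) -> {subset G <= G'} -> {subset D <= D'} ->
  derivable B (G', D').
Proof.
move Es: (G, D) => s der; elim: der G D Es G' D'.
- move=> G0 D0 Th Si ax G D [-> ->] G' D' subG subD.
  apply: d_set (d_ax G' D' ax) _ _.
  + by apply: cat_subset_idr => x x0; apply: subG; rewrite mem_cat x0 orbT.
  + by apply: cat_subset_idl => x x0; apply: subD; rewrite mem_cat x0.
- move=> [[|p ps] [c1 c2]] Th Si r _ IH G D [-> ->] G' D' subG subD.
    apply: d_set (d_ax G' D' r) _ _; first exact: cat_subset_idr.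
    by apply: cat_subset_idl => x x0; apply: subD; rewrite /= cats0.
  have n_gt0 : 0 < size (p :: ps) by [].
  apply: d_set (d_mix (Th := fun=> G') (Si := fun=> D') r _) _ _.
  + move=> i lt_i; have in_flat (F : nat -> seq atom) x : x \in F i ->
        x \in flatten [seq F j | j <- iota 0 (size (p :: ps))].
      by move=> xF; apply/flatten_mapP; exists i; rewrite ?mem_iota.
    apply: (IH i lt_i) => // x; rewrite mem_cat => /orP[] x_in;
      rewrite mem_cat ?x_in ?orbT //.
    * by rewrite subG // mem_cat in_flat.
    * by rewrite subD ?orbT // mem_cat in_flat ?orbT.
  + move=> x; rewrite mem_cat mem_flatten_const //.
    by apply/orP/idP => [[//|xc]|->]; [rewrite subG // mem_cat xc orbT | left].
  + move=> x; rewrite mem_cat mem_flatten_const //.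
    by apply/orP/idP => [[xc|//]|->]; [rewrite subD // mem_cat xc | right].
- move=> G0 D0 G1 D1 _ IH eqG eqD G D [-> ->] G' D' subG subD.
  by apply: IH => // x; rewrite (eqG, eqD) => x_in; [apply: subG | apply: subD].
Qed.

Lemma derivable_axiom c : B (Rule [::] c) -> derivable B c.
Proof. by case: c => G D ax; have := d_ax [::] [::] ax; rewrite cats0. Qed.

Lemma derivable_rule1 p c : B (Rule [:: p] c) -> derivable B p -> derivable B c.
Proof.
case: c => G D r der; have := d_mix (Th := fun=> [::]) (Si := fun=> [::]) r.
by rewrite /= cats0; apply=> -[|] //= _; case: p {r} der => ? ?; rewrite cats0.
Qed.

Lemma derivable_rule2 p q c :
  B (Rule [:: p; q] c) -> derivable B p -> derivable B q -> derivable B c.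
Proof.
case: c => G D r der_p der_q.
have := d_mix (Th := fun=> [::]) (Si := fun=> [::]) r.
rewrite /= cats0; apply=> -[|[|]] //= _.
- by case: p {r} der_p => ? ?; rewrite cats0.
- by case: q {r} der_q => ? ?; rewrite cats0.
Qed.

End Derivability.

Lemma derivable_mono B C s : extends C B -> derivable B s -> derivable C s.
Proof.
move=> sub_C; elim=> [G D Th Si ax | r Th Si r_B _ IH | G D G' D' _ IH eqG eqD].
- exact: d_ax (sub_C _ ax).
- exact: d_mix (sub_C _ r_B) IH.
- exact: d_set IH eqG eqD.
Qed.

Lemma derivable_principal B (f : form -> atom) A G : A \in G ->
  derivable B ([::], map f G) <-> derivable B ([::], f A :: map f [seq X <- G | X != A]).
Proof.
move=> AG; have eqG : map f G =i f A :: map f [seq X <- G | X != A].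
  move=> y; rewrite inE; apply/mapP/orP => [[X XG ->] | [/eqP-> | /mapP[X]]].
  - by case: (eqVneq X A) => [-> | neXA]; [left | right; rewrite map_f // mem_filter neXA].
  - by exists A.
  - by rewrite mem_filter => /andP[_ XG] ->; exists X.
by split=> der; apply: d_set der _ _.
Qed.

Lemma derivable_discharge B a G D :
  (forall G D, B (Rule [::] (a :: G, a :: D))) ->
  derivable (fun r => B r \/ r = Rule [::] ([::], [:: a])) (G, D) ->
  derivable B (a :: G, D).
Proof.
move=> id_a; move Es: (G, D) => s der; elim: der G D Es.
- move=> G0 D0 Th Si [ax | [-> ->]] G D [-> ->].
  + by apply: derivable_weaken (d_ax (a :: Th) Si ax) _ _; solve_subset.
  + by apply: derivable_weaken (derivable_axiom (id_a [::] [::])) _ _; solve_subset.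
- move=> r Th Si [r_B | ->] _ IH G D [-> ->]; last first.
    by apply: derivable_weaken (derivable_axiom (id_a [::] [::])) _ _; solve_subset.
  have := d_mix (Th := fun i => a :: Th i) (Si := Si) r_B (fun i lt_i => IH i lt_i _ _ erefl).
  move/derivable_weaken; apply=> // x; rewrite mem_cat => /orP[|x_c]; last first.
    by rewrite inE mem_cat x_c !orbT.
  case/flatten_mapP=> i i_in; rewrite inE => /orP[/eqP-> | x_Th]; first by rewrite inE eqxx.
  by rewrite inE mem_cat; apply/orP; right; apply/orP; left; apply/flatten_mapP; exists i.
- move=> G0 D0 G1 D1 _ IH eqG eqD G D [-> ->].
  by apply: derivable_weaken (IH _ _ erefl) _ _ => x; rewrite ?inE -?eqG -?eqD.
Qed.

Section QuasiSimulation.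
Variables (S : seq form) (alpha : form -> atom) (C : base).
Hypothesis sub_C : extends C (QBase S alpha).

Lemma derivable_And A1 A2 R : And A1 A2 \in S ->
  derivable C ([::], alpha (And A1 A2) :: R) <->
  derivable C ([::], alpha A1 :: R) /\ derivable C ([::], alpha A2 :: R).
Proof.
move=> AS; split=> [der | [der1 der2]].
  have der' : derivable C ([::], R ++ [:: alpha (And A1 A2)]).
    by apply: derivable_weaken der _ _; solve_subset.
  have r1 : C (Rule [:: ([::], R ++ [:: alpha (And A1 A2)])] ([::], R ++ [:: alpha A1])).
    by apply: sub_C; right; exists [::], R, [::], [::]; left; exists A1, A2; split; [|left].
  have r2 : C (Rule [:: ([::], R ++ [:: alpha (And A1 A2)])] ([::], R ++ [:: alpha A2])).
    by apply: sub_C; right; exists [::], R, [::], [::]; left; exists A1, A2; split; [|right; left].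
  by split; [apply: derivable_weaken (derivable_rule1 r1 der') _ _
            |apply: derivable_weaken (derivable_rule1 r2 der') _ _]; solve_subset.
have r : C (Rule [:: ([::], R ++ [:: alpha A1]); ([::], R ++ [:: alpha A2])]
                 ([::] ++ [::], R ++ R ++ [:: alpha (And A1 A2)])).
  by apply: sub_C; right; exists [::], R, [::], R; left; exists A1, A2; split; [|right; right].
apply: derivable_weaken (derivable_rule2 r _ _) _ _; try solve_subset.
- by apply: derivable_weaken der1 _ _; solve_subset.
- by apply: derivable_weaken der2 _ _; solve_subset.
Qed.

Lemma derivable_Or A1 A2 R : Or A1 A2 \in S ->
  derivable C ([::], alpha (Or A1 A2) :: R) <->
  derivable C ([::], alpha A1 :: alpha A2 :: R).
Proof.
move=> AS; split=> der.
- have r : C (Rule [:: ([::], R ++ [:: alpha (Or A1 A2)])] ([::], R ++ [:: alpha A1; alpha A2])).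
    by apply: sub_C; right; exists [::], R, [::], [::]; right; left; exists A1, A2; split; [|left].
  apply: derivable_weaken (derivable_rule1 r _) _ _; try solve_subset.
  by apply: derivable_weaken der _ _; solve_subset.
- have r : C (Rule [:: ([::], R ++ [:: alpha A1; alpha A2])] ([::], R ++ [:: alpha (Or A1 A2)])).
    by apply: sub_C; right; exists [::], R, [::], [::]; right; left; exists A1, A2; split; [|right].
  apply: derivable_weaken (derivable_rule1 r _) _ _; try solve_subset.
  by apply: derivable_weaken der _ _; solve_subset.
Qed.

Lemma derivable_Bot R : Bot \in S ->
  derivable C ([::], alpha Bot :: R) <-> derivable C ([::], R).
Proof.
move=> BS; split=> der; last by apply: derivable_weaken der _ _; solve_subset.
have r : C (Rule [:: ([::], R ++ [:: alpha Bot])] ([::], R)).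
  by apply: sub_C; right; exists [::], R, [::], [::]; right; right; right.
by apply: derivable_rule1 r _; apply: derivable_weaken der _ _; solve_subset.
Qed.

Lemma derivable_Imp A1 A2 R : Imp A1 A2 \in S ->
  derivable C ([::], alpha (Imp A1 A2) :: R) <->
  (forall C', extends C' C -> forall Th,
     derivable C' ([::], Th ++ [:: alpha A1]) -> derivable C' ([::], Th ++ alpha A2 :: R)).
Proof.
move=> AS; split=> [der C' sub_C' Th der1 | der].
  have r : C' (Rule [:: ([::], R ++ [:: alpha (Imp A1 A2)]); ([::], Th ++ [:: alpha A1])]
                    ([::] ++ [::], R ++ Th ++ [:: alpha A2])).
    apply/sub_C'/sub_C; right; exists [::], R, [::], Th.
    by right; right; left; exists A1, A2; split; [|left].
  apply: derivable_weaken (derivable_rule2 r _ der1) _ _; try solve_subset.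
  by apply: derivable_mono sub_C' _; apply: derivable_weaken der _ _; solve_subset.
(* Test the hypothesis in the base extended by the axiom [=> alpha A1]. *)
pose C' r := C r \/ r = Rule [::] ([::], [:: alpha A1]).
have der' := der C' (fun r => @or_introl _ _) [::] (derivable_axiom (or_intror erefl)).
have {der'} der2 : derivable C ([:: alpha A1], alpha A2 :: R).
  by apply: derivable_discharge der' => G D; apply: sub_C; left; exists G, D, (alpha A1).
have r : C (Rule [:: ([:: alpha A1], R ++ [:: alpha A2])] ([::], R ++ [:: alpha (Imp A1 A2)])).
  apply: sub_C; right; exists [::], R, [::], [::].
  by right; right; left; exists A1, A2; split; [|right].
apply: derivable_weaken (derivable_rule1 r _) _ _; try solve_subset.
by apply: derivable_weaken der2 _ _; solve_subset.
Qed.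

End QuasiSimulation.

Lemma subf_refl X : X \in subf X.
Proof. by case: X => *; rewrite inE eqxx. Qed.

Lemma subf_trans Y X Z : X \in subf Y -> Z \in subf X -> Z \in subf Y.
Proof.
elim: Y X => [p | | A IHA B IHB | A IHA B IHB | A IHA B IHB] X /=;
  try by rewrite inE => /eqP->.
all: rewrite inE mem_cat => /orP[/eqP-> // | /orP[XA | XB]] ZX.
all: by rewrite inE mem_cat ?(IHA _ XA ZX) ?(IHB _ XB ZX) ?orbT.
Qed.

Lemma subformulas_closed L X Y :
  X \in subformulas L -> Y \in subf X -> Y \in subformulas L.
Proof.
case/flatten_mapP=> Z ZL XZ YX; apply/flatten_mapP; exists Z => //.
exact: subf_trans XZ YX.
Qed.

Lemma msr_cat G1 G2 : msr (G1 ++ G2) = msr G1 + msr G2.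
Proof. by rewrite /msr map_cat sumn_cat. Qed.

Lemma msr_map_Atm Th : msr (map Atm Th) = 0.
Proof. by elim: Th. Qed.

Lemma msr_cons X G : msr (X :: G) = csize X + msr G.
Proof. by []. Qed.

Lemma msr_filter G (P : pred form) : msr [seq X <- G | P X] <= msr G.
Proof. by elim: G => //= X G; case: (P X); rewrite /msr /=; lia. Qed.

Lemma msr_rem A G : A \in G -> csize A + msr [seq X <- G | X != A] <= msr G.
Proof.
elim: G => //= X G IH; rewrite inE; case: (eqVneq A X) => [<- _ | neAX /IH].
  by have := msr_filter G (fun X => X != A); rewrite /msr /=; lia.
by rewrite /msr /=; lia.
Qed.

Definition atomize (alpha : form -> atom) (X : form) : atom :=
  if X is Atm p then p else alpha X.

Lemma map_atomize_Atm alpha Th : map (atomize alpha) (map Atm Th) = Th.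
Proof. by elim: Th => //= p Th ->. Qed.

Lemma map_atomize_atoms_of alpha G :
  [seq X <- G | compound X] = [::] -> map (atomize alpha) G = atoms_of G.
Proof. by elim: G => //= -[] //= p G IH /IH ->. Qed.

Section Reduction.
Variables (S : seq form) (alpha : form -> atom).
Hypothesis S_closed : forall X Y, X \in S -> Y \in subf X -> Y \in S.
Hypothesis alpha_Atm : forall p, Atm p \in S -> alpha (Atm p) = p.

Definition subformula_context (G : seq form) : bool :=
  all (fun X => compound X ==> (X \in S)) G.

Lemma atomize_alpha X : X \in S -> atomize alpha X = alpha X.
Proof. by case: X => //= p /alpha_Atm. Qed.

Lemma subformula_context_Atm Th : subformula_context (map Atm Th).
Proof. by rewrite /subformula_context all_map; apply/allP. Qed.

Lemma subformula_context_cons X G :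
  X \in S -> subformula_context G -> subformula_context (X :: G).
Proof. by move=> XS G_S; rewrite /= XS implybT. Qed.

Lemma subformula_context_cat G1 G2 :
  subformula_context (G1 ++ G2) = subformula_context G1 && subformula_context G2.
Proof. exact: all_cat. Qed.

Lemma subformula_context_filter (P : pred form) G :
  subformula_context G -> subformula_context [seq X <- G | P X].
Proof.
by rewrite /subformula_context all_filter; apply: sub_all => X /= ->; rewrite implybT.
Qed.

Lemma supp_derivable n G C : msr G < n -> subformula_context G ->
  extends C (QBase S alpha) ->
  supp n C G <-> derivable C ([::], map (atomize alpha) G).
Proof.
elim: n G C => [// | n IH] G C lt_n G_S sub_C /=.
case E: [seq X <- G | compound X] => [|A rest]; first by rewrite map_atomize_atoms_of.
have /andP[cA AG] : compound A && (A \in G) by rewrite -mem_filter E inE eqxx.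
have AS : A \in S by move/allP: G_S => /(_ A AG); rewrite cA.
have msr_A := msr_rem AG; rewrite (derivable_principal _ _ AG).
have R_S := subformula_context_filter (fun X => X != A) G_S.
clear E rest G_S; move: [seq X <- G | X != A] R_S msr_A => R R_S msr_A {AG}.
have sub A' : A' \in subf A -> A' \in S := S_closed AS.
case: A cA AS msr_A sub => [p | | A1 A2 | A1 A2 | A1 A2] //= _ AS msr_A sub.
- by rewrite (derivable_Bot sub_C _ AS) IH //; lia.
all: have A1S : A1 \in S by apply: sub; rewrite inE mem_cat subf_refl ?orbT.
all: have A2S : A2 \in S by apply: sub; rewrite inE mem_cat subf_refl ?orbT.
- rewrite (derivable_And sub_C _ AS) !IH ?subformula_context_cons ?msr_cons //; try lia.
  by rewrite /= !atomize_alpha.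
- rewrite (derivable_Or sub_C _ AS) IH ?subformula_context_cons ?msr_cons //; try lia.
  by rewrite /= !atomize_alpha.
- have IH_Atm C' Th Y : extends C' C -> msr Y < n -> subformula_context Y ->
      supp n C' (map Atm Th ++ Y) <-> derivable C' ([::], Th ++ map (atomize alpha) Y).
    move=> sub_C' lt_Y Y_S; rewrite IH ?map_cat ?map_atomize_Atm //.
    - by rewrite msr_cat msr_map_Atm.
    - by rewrite subformula_context_cat subformula_context_Atm.
    - by move=> r /sub_C /sub_C'.
  have lt_A1 : msr [:: A1] < n by rewrite msr_cons /msr /=; lia.
  have lt_A2 : msr (A2 :: R) < n by rewrite msr_cons; lia.
  have ctx_A1 : subformula_context [:: A1] by rewrite subformula_context_cons.
  have ctx_A2R : subformula_context (A2 :: R) by rewrite subformula_context_cons.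
  rewrite (derivable_Imp sub_C _ AS) -(atomize_alpha A1S) -(atomize_alpha A2S).
  split=> der C' sub_C' Th.
  all: move: (IH_Atm C' Th _ sub_C' lt_A1 ctx_A1) (IH_Atm C' Th _ sub_C' lt_A2 ctx_A2R) => /=.
  - by move=> <- <-; apply: der.
  - by move=> -> ->; apply: der.
Qed.
End Reduction.

Theorem lemma6 (Gam Del : seq form) (alpha : form -> atom)
  (Hmap : atomic_mapping (subformulas (Gam ++ Del)) alpha)
  (Th : seq atom) (Sig : seq form)
  (Hne : Sig != [::])
  (Hsub : {subset Sig <= subformulas (Gam ++ Del)})
  (B : base) (HB : extends B (QBase (subformulas (Gam ++ Del)) alpha)) :
  supports B (Sig ++ map Atm Th) <-> derivable B ([::], map alpha Sig ++ Th).
Proof.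
have [_ alpha_Atm] := Hmap.
have Sig_S : subformula_context (subformulas (Gam ++ Del)) Sig.
  by apply/allP=> X /Hsub ->; rewrite implybT.
rewrite /supports (supp_derivable (@subformulas_closed _) alpha_Atm) //; last first.
  by rewrite subformula_context_cat Sig_S subformula_context_Atm.
rewrite map_cat map_atomize_Atm; have -> // : map (atomize alpha) Sig = map alpha Sig.
by apply/eq_in_map=> X /Hsub; apply: atomize_alpha.
Qed.
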